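(* Let $T=\left(\begin{smallmatrix}\mathbb{C}&\mathbb{C}\\0&\mathbb{C}\end{smallmatrix}\right)$ be the algebra of upper triangular complex $2\times2$ matrices (with norm $\|\left(\begin{smallmatrix}a&b\\0&c\end{smallmatrix}\right)\|=|a|+|b|+|c|$), and let $\phi\in\Delta(T)$ be given by $\phi\left(\begin{smallmatrix}a&b\\0&c\end{smallmatrix}\right)=c$. Then $T$ is not approximately left $\phi$-biprojective.
   Context: $\Delta(A)$ is the set of characters of a Banach algebra $A$; $A\otimes_pA$ is the projective tensor product with $a\cdot(b\otimes c)=ab\otimes c$, $(b\otimes c)\cdot a=b\otimes ca$, $\pi_A(a\otimes b)=ab$. For $\phi\in\Delta(A)$, $A$ is approximately left $\phi$-biprojective if there is a net $(\rho_\alpha)$ of bounded linear maps $A\to A\otimes_pA$ such that for all $a,x\in A$: $\|a\cdot\rho_\alpha(x)-\rho_\alpha(ax)\|\to0$, $\|\rho_\alpha(xa)-\phi(a)\rho_\alpha(x)\|\to0$, and $\phi(\pi_A(\rho_\alpha(x)))-\phi(x)\to0$. *)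

From Stdlib Require Import Reals.
Open Scope R_scope.

Record C := mkC { re : R; im : R }.
Definition C0 : C := mkC 0 0.
Definition C1 : C := mkC 1 0.
Definition Cadd (z w : C) : C := mkC (re z + re w) (im z + im w).
Definition Copp (z : C) : C := mkC (- re z) (- im z).
Definition Csub (z w : C) : C := Cadd z (Copp w).
Definition Cmul (z w : C) : C :=
  mkC (re z * re w - im z * im w) (re z * im w + im z * re w).
Definition Cnorm (z : C) : R := sqrt (re z * re z + im z * im z).

(** * The algebra T of upper triangular complex 2x2 matrices.
    An element [[a, b], [0, c]] is the function  i11 |-> a, i12 |-> b, i22 |-> c. *)
Inductive idx := i11 | i12 | i22.
Definition T := idx -> C.

Definition sumidx (f : idx -> C) : C := Cadd (Cadd (f i11) (f i12)) (f i22).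
Definition sumidxR (f : idx -> R) : R := f i11 + f i12 + f i22.

Definition Tadd (x y : T) : T := fun k => Cadd (x k) (y k).
Definition Tscale (l : C) (x : T) : T := fun k => Cmul l (x k).
Definition Tmul (x y : T) : T := fun k =>
  match k with
  | i11 => Cmul (x i11) (y i11)
  | i12 => Cadd (Cmul (x i11) (y i12)) (Cmul (x i12) (y i22))
  | i22 => Cmul (x i22) (y i22)
  end.
Definition Tnorm (x : T) : R := sumidxR (fun k => Cnorm (x k)).

Definition Tunit (i : idx) : T := fun k =>
  match i, k with
  | i11, i11 | i12, i12 | i22, i22 => C1
  | _, _ => C0
  end.

Definition phi22 (x : T) : C := x i22.

(** T is 3-dimensional, so T (x) T is 9-dimensional; an element u is given by its
    coordinates u i j on the basis e_i (x) e_j.  Since (T, ||.||) is isometric to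
    l^1_3(C), the projective tensor norm is the l^1 norm of these coordinates
    (l^1(I) (x)_p l^1(J) = l^1(I x J) isometrically). *)
Definition TT := idx -> idx -> C.
Definition TTadd (u v : TT) : TT := fun i j => Cadd (u i j) (v i j).
Definition TTsub (u v : TT) : TT := fun i j => Csub (u i j) (v i j).
Definition TTscale (l : C) (u : TT) : TT := fun i j => Cmul l (u i j).
Definition TTnorm (u : TT) : R := sumidxR (fun i => sumidxR (fun j => Cnorm (u i j))).
Definition tens (x y : T) : TT := fun i j => Cmul (x i) (y j).
(* a . (b (x) c) = ab (x) c *)
Definition lact (a : T) (u : TT) : TT := fun i j => Tmul a (fun k => u k j) i.
(* (b (x) c) . a = b (x) ca *)
Definition ract (u : TT) (a : T) : TT := fun i j => Tmul (fun k => u i k) a j.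
(* pi_T (b (x) c) = bc *)
Definition piT (u : TT) : T := fun k =>
  sumidx (fun i => sumidx (fun j => Cmul (u i j) (Tmul (Tunit i) (Tunit j) k))).

Record DirectedSet := {
  dI :> Type;
  dle : dI -> dI -> Prop;
  dle_refl : forall a, dle a a;
  dle_trans : forall a b c, dle a b -> dle b c -> dle a c;
  dle_upper : forall a b, exists c, dle a c /\ dle b c;
  d_inhabited : inhabited dI
}.

Definition net_to_zero (D : DirectedSet) (f : D -> R) : Prop :=
  forall eps, 0 < eps -> exists a0 : D, forall a : D, dle D a0 a -> Rabs (f a) < eps.

Definition bounded_linear (f : T -> TT) : Prop :=
  (forall x y, f (Tadd x y) = TTadd (f x) (f y)) /\
  (forall l x, f (Tscale l x) = TTscale l (f x)) /\
  (exists M, forall x, TTnorm (f x) <= M * Tnorm x).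

Definition approx_left_phi_biprojective (phi : T -> C) : Prop :=
  exists (D : DirectedSet) (rho : D -> T -> TT),
    (forall al, bounded_linear (rho al)) /\
    (forall a x : T,
       net_to_zero D (fun al => TTnorm (TTsub (lact a (rho al x)) (rho al (Tmul a x)))) /\
       net_to_zero D (fun al => TTnorm (TTsub (rho al (Tmul x a)) (TTscale (phi a) (rho al x)))) /\
       net_to_zero D (fun al => Cnorm (Csub (phi (piT (rho al x))) (phi x)))).

(* Write [e11, e12, e22] for the matrix units and [rho] for a net witnessing
   approximate left phi-biprojectivity.  Since [e12 = e11 e12] and [phi(e12) = 0],
   right phi-equivariance forces [rho(e12) -> 0].  Since [e12 = e12 e22], left
   equivariance then forces [e12 . rho(e22) -> 0]; the (e12 (x) e22)-coordinate of
   [e12 . rho(e22)] is the (e22 (x) e22)-coordinate of [rho(e22)], which is exactly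
   [phi(pi(rho(e22)))].  Hence [phi(pi(rho(e22))) -> 0], whereas it must tend to
   [phi(e22) = 1]. *)
From Stdlib Require Import Reals Lra FunctionalExtensionality.
Open Scope R_scope.

Section NetsToZero.

Variable D : DirectedSet.

Lemma net_to_zero_le (f g : D -> R) :
  (forall a, Rabs (g a) <= Rabs (f a)) -> net_to_zero D f -> net_to_zero D g.
Proof.
  intros Hgf Hf eps Heps.
  destruct (Hf eps Heps) as [a0 Ha0].
  exists a0; intros a Ha.
  exact (Rle_lt_trans _ _ _ (Hgf a) (Ha0 a Ha)).
Qed.

Lemma net_to_zero_add (f g : D -> R) :
  net_to_zero D f -> net_to_zero D g -> net_to_zero D (fun a => f a + g a).
Proof.
  intros Hf Hg eps Heps.
  assert (Heps2 : 0 < eps / 2) by lra.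
  destruct (Hf _ Heps2) as [a1 Ha1], (Hg _ Heps2) as [a2 Ha2].
  destruct (dle_upper D a1 a2) as [a0 [H10 H20]].
  exists a0; intros a Ha.
  specialize (Ha1 a (dle_trans D _ _ _ H10 Ha)).
  specialize (Ha2 a (dle_trans D _ _ _ H20 Ha)).
  pose proof (Rabs_triang (f a) (g a)).
  lra.
Qed.

Lemma net_to_zero_opp (f : D -> R) :
  net_to_zero D f -> net_to_zero D (fun a => - f a).
Proof.
  apply net_to_zero_le; intro a.
  rewrite Rabs_Ropp; apply Rle_refl.
Qed.

Lemma net_to_zero_const (c : R) : net_to_zero D (fun _ => c) -> c = 0.
Proof.
  intro Hc.
  destruct (d_inhabited D) as [a].
  destruct (Req_dec c 0) as [-> | Hc0]; [reflexivity |].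
  destruct (Hc (Rabs c) (Rabs_pos_lt c Hc0)) as [a0 Ha0].
  specialize (Ha0 a0 (dle_refl D a0)).
  lra.
Qed.

Lemma Rabs_re_le_Cnorm (z : C) : Rabs (re z) <= Cnorm z.
Proof.
  unfold Cnorm; rewrite <- sqrt_Rsqr_abs.
  apply sqrt_le_1_alt.
  unfold Rsqr; pose proof (Rle_0_sqr (im z)); unfold Rsqr in *; lra.
Qed.

Lemma Cnorm_le_TTnorm (u : TT) (i j : idx) : Cnorm (u i j) <= TTnorm u.
Proof.
  assert (Hnn : forall k l, 0 <= Cnorm (u k l)) by (intros; apply sqrt_pos).
  pose proof (Hnn i11 i11); pose proof (Hnn i11 i12); pose proof (Hnn i11 i22).
  pose proof (Hnn i12 i11); pose proof (Hnn i12 i12); pose proof (Hnn i12 i22).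
  pose proof (Hnn i22 i11); pose proof (Hnn i22 i12); pose proof (Hnn i22 i22).
  unfold TTnorm, sumidxR; destruct i, j; lra.
Qed.

Lemma net_to_zero_re (z : D -> C) :
  net_to_zero D (fun a => Cnorm (z a)) -> net_to_zero D (fun a => re (z a)).
Proof.
  apply net_to_zero_le; intro a.
  rewrite (Rabs_pos_eq (Cnorm _)) by apply sqrt_pos.
  apply Rabs_re_le_Cnorm.
Qed.

Lemma net_to_zero_re_entry (u : D -> TT) (i j : idx) :
  net_to_zero D (fun a => TTnorm (u a)) -> net_to_zero D (fun a => re (u a i j)).
Proof.
  apply net_to_zero_le; intro a.
  rewrite (Rabs_pos_eq (TTnorm _)).
  - exact (Rle_trans _ _ _ (Rabs_re_le_Cnorm _) (Cnorm_le_TTnorm _ i j)).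
  - exact (Rle_trans _ _ _ (sqrt_pos _) (Cnorm_le_TTnorm _ i j)).
Qed.

End NetsToZero.

Lemma C_ext (z w : C) : re z = re w -> im z = im w -> z = w.
Proof. destruct z, w; simpl; intros -> ->; reflexivity. Qed.

Lemma Tmul_e11_e12 : Tmul (Tunit i11) (Tunit i12) = Tunit i12.
Proof.
  apply functional_extensionality; intros []; apply C_ext; simpl; ring.
Qed.

Lemma Tmul_e12_e22 : Tmul (Tunit i12) (Tunit i22) = Tunit i12.
Proof.
  apply functional_extensionality; intros []; apply C_ext; simpl; ring.
Qed.

Lemma lact_e12_row (u : TT) (j : idx) : lact (Tunit i12) u i12 j = u i22 j.
Proof. apply C_ext; simpl; ring. Qed.

Lemma phi22_piT (u : TT) : phi22 (piT u) = u i22 i22.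
Proof. apply C_ext; simpl; ring. Qed.

Section ApproxBiprojectiveNet.

Variables (D : DirectedSet) (rho : D -> T -> TT).

Hypothesis rho_left : forall a x : T,
  net_to_zero D (fun al => TTnorm (TTsub (lact a (rho al x)) (rho al (Tmul a x)))).
Hypothesis rho_right : forall a x : T,
  net_to_zero D (fun al => TTnorm (TTsub (rho al (Tmul x a)) (TTscale (phi22 a) (rho al x)))).
Hypothesis rho_diag : forall x : T,
  net_to_zero D (fun al => Cnorm (Csub (phi22 (piT (rho al x))) (phi22 x))).

Lemma rho_e12_to_zero : net_to_zero D (fun al => re (rho al (Tunit i12) i12 i22)).
Proof.
  pose proof (net_to_zero_re_entry _ _ i12 i22 (rho_right (Tunit i12) (Tunit i11))) as H.
  rewrite Tmul_e11_e12 in H.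
  revert H; apply net_to_zero_le; intro al.
  right; f_equal; simpl; ring.
Qed.

Lemma rho_e22_left_defect :
  net_to_zero D (fun al => re (rho al (Tunit i22) i22 i22) - re (rho al (Tunit i12) i12 i22)).
Proof.
  pose proof (net_to_zero_re_entry _ _ i12 i22 (rho_left (Tunit i12) (Tunit i22))) as H.
  rewrite Tmul_e12_e22 in H.
  revert H; apply net_to_zero_le; intro al.
  unfold TTsub at 1; rewrite lact_e12_row.
  apply Rle_refl.
Qed.

Lemma rho_e22_diag_defect : net_to_zero D (fun al => re (rho al (Tunit i22) i22 i22) - 1).
Proof.
  pose proof (net_to_zero_re _ _ (rho_diag (Tunit i22))) as H.
  revert H; apply net_to_zero_le; intro al.
  rewrite phi22_piT; apply Rle_refl.
Qed.

Lemma approx_biprojective_net_absurd : False.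
Proof.
  pose proof (net_to_zero_add _ _ _
               (net_to_zero_add _ _ _ rho_e22_left_defect rho_e12_to_zero)
               (net_to_zero_opp _ _ rho_e22_diag_defect)) as H.
  assert (H1 : net_to_zero D (fun _ => 1)).
  { revert H; apply net_to_zero_le; intro al; right; f_equal; ring. }
  apply net_to_zero_const in H1; lra.
Qed.

End ApproxBiprojectiveNet.

Theorem mainTheorem3 : ~ approx_left_phi_biprojective phi22.
Proof.
  intros [D [rho [_ Hrho]]].
  apply (approx_biprojective_net_absurd D rho).
  - intros a x; apply (Hrho a x).
  - intros a x; apply (Hrho a x).
  - intro x; apply (Hrho x x).
Qed.
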